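(* Let $\lambda$ be a partition of length $<n$ whose diagram consists of $d_i$ columns of length $n_i$ ($i=1,\dots,s$, $n_1<\dots<n_s$, $d_i\ge1$), and let $t\in\mathbb{S}_\lambda V$ be nonzero. If the Catalecticant Procedure applied to $(\lambda,t)$ outputs $r$, then $t$ has $\lambda$-rank at least $r$.
   Context: $V$ is an $n$-dimensional vector space over an algebraically closed field of characteristic $0$. $\mathbb{S}_\lambda V\subset\bigotimes_j\bigwedge^{\lambda'_j}V$ is the image of the Young symmetrizer (row symmetrization then column antisymmetrization, tableau filled column by column). Schur apolarity $\varphi:\mathbb{S}_\lambda V\otimes\mathbb{S}_\mu V^*\to\mathbb{S}_{\lambda/\mu}V$ is the restriction of the tensor product over columns of the contractions $(v_1\wedge\dots\wedge v_k)\otimes(\alpha_1\wedge\dots\wedge\alpha_h)\mapsto\sum_{|R|=h}\operatorname{sign}(R)\det(\alpha_i(v_j))_{j\in R}v_{\overline R}$; catalecticant $\mathcal{C}^{\lambda,\mu}_t(g)=\varphi(t\otimes g)$. $(e^m)$ is the rectangular partition with $m$ parts equal to $e$. An element of $\mathbb{S}_\lambda V$ has $\lambda$-rank $1$ if it equals $(v_1\wedge\dots\wedge v_{n_s})^{\otimes d_s}\otimes\dots\otimes(v_1\wedge\dots\wedge v_{n_1})^{\otimes d_1}$ for linearly independent $v_1,\dots,v_{n_s}$; the $\lambda$-rank of $t$ is the least $r$ with $t$ a sum of $r$ such elements. Catalecticant Procedure: set $i=s$, $\lambda^{(s)}=\lambda$, $t^{(s)}=t$. While $i\ge1$: $\lambda^{(i)}$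 has $d_j$ columns of length $n_j$ for $j\le i$; compute $r=\operatorname{rk}\mathcal{C}^{\lambda^{(i)},(\lceil d_i/2\rceil^{n_i})}_{t^{(i)}}$; if $r>1$, output $r$ and stop; otherwise the image of $\mathcal{C}^{\lambda^{(i)},(d_i^{n_i})}_{t^{(i)}}$, in $\mathbb{S}_{\lambda^{(i)}/(d_i^{n_i})}V\cong\mathbb{S}_{\lambda^{(i-1)}}V$ ($\lambda^{(i-1)}$ = $\lambda^{(i)}$ without its first $d_i$ columns), is one-dimensional; let $t^{(i-1)}$ generate it, $i\leftarrow i-1$. If $i$ reaches $0$, output $1$. *)

From HB Require Import structures.
From mathcomp Require Import all_boot all_order all_fingroup all_algebra.
Set Implicit Arguments. Unset Strict Implicit. Unset Printing Implicit Defensive.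
Import GRing.Theory.
Local Open Scope ring_scope.

(* V = F^n with standard basis e_0..e_(n-1); V^* with the dual basis.         *)
(* A (skew) Young diagram is handled through its boxes (j, r) : nat * nat,    *)
(* j = column index, r = position (row) inside column j.  A partition is given *)
(* by the sequence of its column lengths (= conjugate partition lambda').     *)
(* Tensors on a set of boxes B (one tensor factor V per box) are represented  *)
(* by their coordinates: functions {ffun B -> 'I_n} -> F.  The space          *)
(* (x)_j /\^{lambda'_j} V is identified with the column-antisymmetric tensors *)
(* via v_1/\../\v_k |-> sum_s sgn(s) v_s(1) (x) .. (x) v_s(k).                *)

Definition shape_boxes (cols : seq nat) : seq (nat * nat) :=
  [seq (j, r) | j <- iota 0 (size cols), r <- iota 0 (nth 0%N cols j)].

Definition box (cols : seq nat) := seq_sub (shape_boxes cols).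

Definition skewbox (lam mu : seq nat) :=
  seq_sub [seq p <- shape_boxes lam | p \notin shape_boxes mu].

Section Tensors.
Variables (F : fieldType) (n : nat).

Local Notation tensor B := {ffun {ffun B -> 'I_n} -> F^o}.

(* basis tensor e_f = (x)_b e_(f b) (or its dual) *)
Definition delta (B : finType) (f : {ffun B -> 'I_n}) : tensor B :=
  [ffun f' => (f' == f)%:R].

Definition pact (B : finType) (s : {perm B}) (T : tensor B) : tensor B :=
  [ffun f : {ffun B -> 'I_n} => T [ffun b => f (s b)]].

Definition row_pres (cols : seq nat) (s : {perm box cols}) : bool :=
  [forall b, (ssval (s b)).2 == (ssval b).2].
Definition col_pres (cols : seq nat) (s : {perm box cols}) : bool :=
  [forall b, (ssval (s b)).1 == (ssval b).1].

Definition row_sym (cols : seq nat) (T : tensor (box cols)) : tensor (box cols) :=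
  \sum_(p : {perm box cols} | row_pres p) pact p T.
Definition col_antisym (cols : seq nat) (T : tensor (box cols)) : tensor (box cols) :=
  \sum_(q : {perm box cols} | col_pres q) (-1) ^+ odd_perm q *: pact q T.
Definition young (cols : seq nat) (T : tensor (box cols)) : tensor (box cols) :=
  col_antisym (row_sym T).

Definition inSchur (cols : seq nat) (t : tensor (box cols)) : Prop :=
  exists T, t = young T.

(* the lambda-rank-one element (v_1/\../\v_{n_s})^{(x)d_s} (x) .. (x)
   (v_1/\../\v_{n_1})^{(x)d_1}; the vector v_(r+1) is v r. *)
Definition pure (cols : seq nat) (v : nat -> 'rV[F]_n) : tensor (box cols) :=
  [ffun f : {ffun box cols -> 'I_n} => \prod_(b : box cols) v (ssval b).2 0 (f b)].
Definition rank_one_elt (cols : seq nat) (v : nat -> 'rV[F]_n) : tensor (box cols) :=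
  col_antisym (pure cols v).
(* v_1, .., v_{n_s} linearly independent, n_s = longest column *)
Definition lin_indep_data (cols : seq nat) (v : nat -> 'rV[F]_n) : bool :=
  row_free (\matrix_(a < head 0%N cols) v a).

(* Schur apolarity phi(t (x) g) for mu contained in lam: contraction of the
   slots of the boxes of mu (box (j,r) of mu against box (j,r) of lam). *)
Definition agree (lam mu : seq nat) (Fl : {ffun box lam -> 'I_n})
  (f : {ffun box mu -> 'I_n}) (h : {ffun skewbox lam mu -> 'I_n}) : bool :=
  [forall b : box lam,
     (if (insub (ssval b) : option (box mu)) is Some c then Fl b == f c else true)
  && (if (insub (ssval b) : option (skewbox lam mu)) is Some c then Fl b == h c
      else true)].

Definition apolar (lam mu : seq nat) (t : tensor (box lam)) (g : tensor (box mu)) :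
    tensor (skewbox lam mu) :=
  [ffun h => \sum_(f : {ffun box mu -> 'I_n})
               \sum_(Fl : {ffun box lam -> 'I_n} | agree Fl f h) g f * t Fl].

(* rank of the catalecticant C^{lam,mu}_t : S_mu V^* -> S_{lam/mu} V, i.e. the
   dimension of the span of the images of the spanning family young(e_f^* ). *)
Definition cat_rank (lam mu : seq nat) (t : tensor (box lam)) : nat :=
  \rank (\matrix_(i < #|{ffun box mu -> 'I_n}|, j < #|{ffun skewbox lam mu -> 'I_n}|)
           apolar t (young (delta (enum_val i))) (enum_val j)).

(* the identification S_{lam/mu} V ~ S_{lam'} V when lam/mu is lam' shifted
   by c columns: box (j + c, r) of lam/mu <-> box (j, r) of lam'. *)
Definition reindex (lam mu lam' : seq nat) (c : nat) (s : tensor (skewbox lam mu)) :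
    tensor (box lam') :=
  [ffun f' : {ffun box lam' -> 'I_n} => \sum_(h : {ffun skewbox lam mu -> 'I_n} |
       [forall b : skewbox lam mu, forall b' : box lam',
          (((ssval b).1 == (ssval b').1 + c)%N && ((ssval b).2 == (ssval b').2))
            ==> (h b == f' b')]) s h].

Definition generates_image (lam mu lam' : seq nat) (c : nat) (t : tensor (box lam))
    (t' : tensor (box lam')) : Prop :=
  [/\ t' != 0,
      exists g : tensor (box mu), inSchur g /\ t' = reindex lam' c (apolar t g)
    & forall g : tensor (box mu), inSchur g -> exists a : F, reindex lam' c (apolar t g) = a *: t'].

(* blocks [:: (n_s, d_s); ..; (n_1, d_1)] : d_i columns of length n_i *)
Definition cols_of (bl : seq (nat * nat)) : seq nat :=
  flatten [seq nseq p.2 p.1 | p <- bl].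

Fixpoint CatProc (bl : seq (nat * nat)) : tensor (box (cols_of bl)) -> nat -> Prop :=
  match bl return tensor (box (cols_of bl)) -> nat -> Prop with
  | [::] => fun _ r => r = 1%N
  | p :: rest => fun t r =>
      let r0 := cat_rank (nseq (uphalf p.2) p.1) t in
      (1 < r0 /\ r = r0)%N \/
      ((r0 <= 1)%N /\
       exists t' : tensor (box (cols_of rest)),
         @generates_image (cols_of (p :: rest)) (nseq p.2 p.1) (cols_of rest) p.2 t t' /\ CatProc t' r)
  end.

End Tensors.

Notation tensor F n B := {ffun {ffun B -> 'I_n} -> F^o}.

From Pilot Require Import Defs.
From HB Require Import structures.
From mathcomp Require Import all_boot all_order all_fingroup all_algebra.
Set Implicit Arguments. Unset Strict Implicit. Unset Printing Implicit Defensive.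
Import GRing.Theory.
Local Open Scope ring_scope.

(* The bound r <= lambda-rank holds because every catalecticant of a sum of m
   lambda-rank-one elements has rank at most m, and each contraction performed
   by the Catalecticant Procedure turns a sum of m rank-one elements into a sum
   of m rescaled rank-one elements of the smaller shape. *)

Local Notation colno b := (ssval b).1.
Local Notation rowno b := (ssval b).2.

Section ColumnWedges.
Variables (F : fieldType) (n : nat) (L : seq nat).

Lemma col_presP (q : {perm box L}) (b : box L) : col_pres q -> colno (q b) = colno b.
Proof. by move=> /forallP /(_ b) /eqP. Qed.

Lemma col_presM (p1 p2 : {perm box L}) :
  col_pres p1 -> col_pres p2 -> col_pres (p1 * p2)%g.
Proof.
by move=> c1 c2; apply/forallP => b; rewrite permM (col_presP _ c2) (col_presP _ c1).
Qed.

Definition supported (P : pred nat) (q : {perm box L}) : bool :=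
  col_pres q && [forall b, ~~ P (colno b) ==> (q b == b)].

Lemma supported_col (P : pred nat) q : supported P q -> col_pres q.
Proof. by case/andP. Qed.

Lemma supported_fix (P : pred nat) q b : supported P q -> ~~ P (colno b) -> q b = b.
Proof. by case/andP => _ /forallP /(_ b) /implyP H /H /eqP. Qed.

(* The f-coordinate of the tensor product, over the columns j of L with P j, of
   the wedges w_0 /\ .. /\ w_(len_j - 1) (one column-antisymmetrizer per column). *)
Definition wedge (P : pred nat) (w : nat -> 'rV[F]_n) (f : {ffun box L -> 'I_n}) : F :=
  \sum_(q : {perm box L} | supported P q) (-1) ^+ odd_perm q *
     \prod_(b : box L | P (colno b)) w (rowno b) 0 (f (q b)).

Lemma wedge_eq_pred (P P' : pred nat) (w : nat -> 'rV[F]_n) (f : {ffun box L -> 'I_n}) :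
  P =1 P' -> wedge P w f = wedge P' w f.
Proof.
move=> eP; apply: eq_big => [q|q _].
  by rewrite /supported; congr (_ && _); apply: eq_forallb => b; rewrite eP.
by congr (_ * _); apply: eq_bigl => b; rewrite eP.
Qed.

Lemma wedge_local (P : pred nat) (w : nat -> 'rV[F]_n) (f1 f2 : {ffun box L -> 'I_n}) :
  (forall b : box L, P (colno b) -> f1 b = f2 b) -> wedge P w f1 = wedge P w f2.
Proof.
move=> e12; apply: eq_bigr => q /andP [cq _]; congr (_ * _).
by apply: eq_bigr => b Pb; rewrite e12 // col_presP.
Qed.

Definition restrict_fun (P : pred nat) (q : {perm box L}) : {ffun box L -> box L} :=
  [ffun b => if P (colno b) then q b else b].

Definition restrict (P : pred nat) (q : {perm box L}) : {perm box L} :=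
  insubd (1%g : {perm box L}) (restrict_fun P q).

Lemma restrictE (P : pred nat) q b :
  col_pres q -> restrict P q b = if P (colno b) then q b else b.
Proof.
move=> cq; have inj : injectiveb (restrict_fun P q).
  apply/injectiveP => b1 b2; rewrite !ffunE.
  case: ifP => P1; case: ifP => P2 //.
  - exact: perm_inj.
  - by move=> e; move: P1; rewrite -(col_presP b1 cq) e P2.
  - by move=> e; move: P2; rewrite -(col_presP b2 cq) -e P1.
have e := insubdK (1%g : {perm box L}) inj.
by rewrite /restrict -pvalE e ffunE.
Qed.

Lemma supported_restrict (P : pred nat) q : col_pres q -> supported P (restrict P q).
Proof.
move=> cq; apply/andP; split; apply/forallP => b; rewrite restrictE //.
  by case: ifP => _ //; rewrite (col_presP _ cq).
by apply/implyP => /negbTE ->.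
Qed.

Section Disjoint.
Variables (P Q : pred nat).
Hypothesis PQ_disjoint : forall j, P j -> ~~ Q j.

Lemma supported_mul p1 p2 :
  supported P p1 -> supported Q p2 -> supported (predU P Q) (p1 * p2)%g.
Proof.
move=> s1 s2; rewrite /supported col_presM ?(supported_col s1) ?(supported_col s2) //=.
apply/forallP => b; apply/implyP; rewrite /= negb_or => /andP [nP nQ].
by rewrite permM (supported_fix s1) // (supported_fix s2).
Qed.

Lemma restrict_mul q :
  supported (predU P Q) q -> (restrict P q * restrict Q q)%g = q.
Proof.
move=> sq; have cq := supported_col sq; apply/permP => b.
rewrite permM (restrictE P) //; case: ifP => Pb.
  by rewrite restrictE // (col_presP _ cq) (negbTE (PQ_disjoint Pb)).
by rewrite restrictE //; case: ifP => Qb //; rewrite (supported_fix sq) //= Pb Qb.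
Qed.

Lemma restrict_mul_l p1 p2 :
  supported P p1 -> supported Q p2 -> restrict P (p1 * p2)%g = p1.
Proof.
move=> s1 s2; have c1 := supported_col s1.
apply/permP => b; rewrite restrictE ?col_presM ?(supported_col s2) // permM.
case: ifP => Pb; last by rewrite (supported_fix s1) // Pb.
by rewrite (supported_fix s2) // (col_presP _ c1) PQ_disjoint.
Qed.

Lemma restrict_mul_r p1 p2 :
  supported P p1 -> supported Q p2 -> restrict Q (p1 * p2)%g = p2.
Proof.
move=> s1 s2; apply/permP => b.
rewrite restrictE ?col_presM ?(supported_col s1) ?(supported_col s2) // permM.
case: ifP => Qb; last by rewrite (supported_fix s2) // Qb.
by rewrite (supported_fix s1) //; apply: contraTN Qb => /PQ_disjoint.
Qed.

Lemma wedge_term_mul (w : nat -> 'rV[F]_n) (f : {ffun box L -> 'I_n}) p1 p2 :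
  supported P p1 -> supported Q p2 ->
  (-1) ^+ odd_perm (p1 * p2)%g *
    \prod_(b : box L | P (colno b) || Q (colno b)) w (rowno b) 0 (f ((p1 * p2)%g b)) =
  ((-1) ^+ odd_perm p1 * \prod_(b : box L | P (colno b)) w (rowno b) 0 (f (p1 b))) *
  ((-1) ^+ odd_perm p2 * \prod_(b : box L | Q (colno b)) w (rowno b) 0 (f (p2 b))).
Proof.
move=> s1 s2; rewrite odd_permM signr_addb (bigID (fun b : box L => P (colno b))) /=.
have -> : \prod_(b | (P (colno b) || Q (colno b)) && P (colno b))
            w (rowno b) 0 (f ((p1 * p2)%g b)) =
          \prod_(b | P (colno b)) w (rowno b) 0 (f (p1 b)).
  apply: eq_big => [b|b /andP [_ Pb]]; first by case: (P _); rewrite ?andbF.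
  by rewrite permM (supported_fix s2) // (col_presP _ (supported_col s1)) PQ_disjoint.
have -> : \prod_(b | (P (colno b) || Q (colno b)) && ~~ P (colno b))
            w (rowno b) 0 (f ((p1 * p2)%g b)) =
          \prod_(b | Q (colno b)) w (rowno b) 0 (f (p2 b)).
  apply: eq_big => [b|b /andP [_ nPb]]; last by rewrite permM (supported_fix s1).
  by case Pb: (P _); rewrite /= ?andbT // (negbTE (PQ_disjoint Pb)).
by rewrite -!mulrA; congr (_ * _); rewrite mulrCA.
Qed.

Lemma wedge_split (w : nat -> 'rV[F]_n) (f : {ffun box L -> 'I_n}) :
  wedge (predU P Q) w f = wedge P w f * wedge Q w f.
Proof.
rewrite /wedge mulr_suml; under [RHS]eq_bigr do rewrite mulr_sumr.
rewrite pair_big_dep /= (reindex_onto (fun p => (p.1 * p.2)%g)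
  (fun q => (restrict P q, restrict Q q))) /=; last exact: restrict_mul.
have restrict_supported q p1 p2 : supported (predU P Q) q ->
    (restrict P q, restrict Q q) = (p1, p2) -> supported P p1 && supported Q p2.
  by move=> sq [<- <-]; rewrite !supported_restrict // (supported_col sq).
apply: eq_big => [[p1 p2]|[p1 p2] /andP [sq /eqP]] /=; last first.
  by case/(restrict_supported _ _ _ sq)/andP; apply: wedge_term_mul.
apply/andP/andP => [[sq]|[s1 s2]]; first by move/eqP/(restrict_supported _ _ _ sq)/andP.
by rewrite supported_mul // restrict_mul_l // restrict_mul_r.
Qed.

End Disjoint.
End ColumnWedges.

Lemma mem_shape (cols : seq nat) (p : nat * nat) :
  (p \in shape_boxes cols) = (p.1 < size cols)%N && (p.2 < nth 0%N cols p.1)%N.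
Proof.
case: p => j r; apply/allpairsPdep/andP => [[x [y [hx hy [-> ->]]]]|[hj hr]].
  by move: hx hy; rewrite !mem_iota /= !add0n => -> ->.
by exists j, r; rewrite !mem_iota /= !add0n hj hr.
Qed.

Lemma mem_skew (lam mu : seq nat) (p : nat * nat) :
  (p \in [seq p <- shape_boxes lam | p \notin shape_boxes mu]) =
  (p \in shape_boxes lam) && (p \notin shape_boxes mu).
Proof. by rewrite mem_filter andbC. Qed.

Section Transport.
Variables (F : fieldType) (n : nat) (z0 : 'I_n).

Definition read_at (lam : seq nat) (f : {ffun box lam -> 'I_n}) (p : nat * nat) : 'I_n :=
  if (insub p : option (box lam)) is Some b then f b else z0.

(* Index function on the full shape L which puts at box (j, r) the index of
   f at box (j - o, r): lam is viewed as L with its first o columns removed. *)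
Definition pullback (L lam : seq nat) (o : nat) (f : {ffun box lam -> 'I_n}) :
    {ffun box L -> 'I_n} :=
  [ffun b => read_at f (colno b - o, rowno b)%N].

Definition join (lam mu : seq nat) (f : {ffun box mu -> 'I_n})
    (h : {ffun skewbox lam mu -> 'I_n}) : {ffun box lam -> 'I_n} :=
  [ffun b => if (insub (ssval b) : option (box mu)) is Some c then f c
     else if (insub (ssval b) : option (skewbox lam mu)) is Some c then h c else z0].

Lemma agree_join (lam mu : seq nat) (Fl : {ffun box lam -> 'I_n})
    (f : {ffun box mu -> 'I_n}) (h : {ffun skewbox lam mu -> 'I_n}) :
  agree Fl f h = (Fl == join f h).
Proof.
apply/idP/eqP => [/forallP agreeFl|->].
  apply/ffunP => b; rewrite ffunE.
  move: (agreeFl b); case: insubP => [c _ _ /andP [/eqP //]|nmu /andP [_]].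
  case: insubP => [c _ _ /eqP //|]; by rewrite mem_skew (valP b) nmu.
apply/forallP => b; rewrite !ffunE.
case: insubP => [c Pmu _|nmu] /=; last by case: insubP.
by rewrite eqxx; case: insubP => [c' |//]; rewrite mem_skew Pmu andbF.
Qed.

Lemma apolarE (lam mu : seq nat) (T : tensor F n (box lam)) (g : tensor F n (box mu))
    (h : {ffun skewbox lam mu -> 'I_n}) :
  apolar T g h = \sum_(f : {ffun box mu -> 'I_n}) g f * T (join f h).
Proof.
rewrite ffunE; apply: eq_bigr => f _; rewrite (big_pred1 (join f h)) // => Fl.
exact: agree_join.
Qed.

Definition decomposition (L lam : seq nat) (T : tensor F n (box lam)) (o m : nat)
    (c : 'I_m -> F) (vs : 'I_m -> nat -> 'rV[F]_n) : Prop :=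
  forall f, T f = \sum_(i < m) c i * wedge (fun j => o <= j)%N (vs i) (pullback L o f).

Lemma rank_one_decomposition (L : seq nat) (m : nat) (v : 'I_m -> nat -> 'rV[F]_n) :
  decomposition L (\sum_(i < m) rank_one_elt L (v i)) 0 (fun _ => 1) v.
Proof.
move=> f; rewrite sum_ffunE; apply: eq_bigr => i _; rewrite mul1r.
rewrite /rank_one_elt /col_antisym sum_ffunE /wedge.
apply: eq_big => [q|q cq].
  by rewrite /supported; apply/idP/andP => [cq|[] //]; split=> //; apply/forallP.
rewrite !ffunE; congr (_ * _); apply: eq_big => [//|b _].
rewrite !ffunE /read_at subn0 -surjective_pairing.
case: insubP => [b' _ E|]; last by rewrite (valP (q b)).
by congr (v i _ 0 (f _)); apply: val_inj.
Qed.

End Transport.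

Section Contraction.
Variables (F : fieldType) (n : nat) (z0 : 'I_n) (L lam mu : seq nat) (e : nat).
Hypothesis mu_prefix : mu = take e lam.

Lemma prefix_box (p : nat * nat) :
  p \in shape_boxes lam -> (p.1 < e)%N -> p \in shape_boxes mu.
Proof.
rewrite !mem_shape mu_prefix size_take_min leq_min => /andP [pl pr] pe.
by rewrite pe pl /= nth_take.
Qed.

Lemma prefix_notin (p : nat * nat) : (e <= p.1)%N -> p \notin shape_boxes mu.
Proof.
rewrite mem_shape mu_prefix size_take_min => pe.
by rewrite negb_and -leqNgt (leq_trans (geq_minl _ _) pe).
Qed.

(* Filler index functions; by pullback_join_mu / pullback_join_skew their
   values never matter. *)
Definition default_mu : {ffun box mu -> 'I_n} := [ffun => z0].
Definition default_skew : {ffun skewbox lam mu -> 'I_n} := [ffun => z0].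

Definition mu_factor (o : nat) (w : nat -> 'rV[F]_n) (g : tensor F n (box mu)) : F :=
  \sum_(f : {ffun box mu -> 'I_n}) g f *
    wedge (fun j => (o <= j) && (j < o + e))%N w (pullback z0 L o (join z0 f default_skew)).

Definition skew_factor (o : nat) (w : nat -> 'rV[F]_n)
    (h : {ffun skewbox lam mu -> 'I_n}) : F :=
  wedge (fun j => o + e <= j)%N w (pullback z0 L o (join z0 default_mu h)).

Lemma pullback_join_mu o (f : {ffun box mu -> 'I_n}) (h h' : {ffun skewbox lam mu -> 'I_n})
    (b : box L) : (o <= colno b)%N && (colno b < o + e)%N ->
  pullback z0 L o (join z0 f h) b = pullback z0 L o (join z0 f h') b.
Proof.
move=> /andP [ob be]; rewrite !ffunE /read_at.
case: insubP => [c Pc Ec|] //; rewrite !ffunE.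
case: insubP => [//|]; rewrite prefix_box ?(valP c) // Ec /=.
by rewrite ltn_subLR // addnC.
Qed.

Lemma pullback_join_skew o (f f' : {ffun box mu -> 'I_n}) (h : {ffun skewbox lam mu -> 'I_n})
    (b : box L) : (o + e <= colno b)%N ->
  pullback z0 L o (join z0 f h) b = pullback z0 L o (join z0 f' h) b.
Proof.
move=> eb; rewrite !ffunE /read_at.
case: insubP => [c _ Ec|] //; rewrite !ffunE.
case: insubP => [c' + _|//]; rewrite (negbTE (prefix_notin _)) // Ec /= leq_subRL //.
exact: leq_trans (leq_addr _ _) eb.
Qed.

Lemma apolar_decomp (T : tensor F n (box lam)) o m c vs :
  decomposition z0 L T o c vs ->
  forall (g : tensor F n (box mu)) (h : {ffun skewbox lam mu -> 'I_n}),
  apolar T g h = \sum_(i < m) c i * mu_factor o (vs i) g * skew_factor o (vs i) h.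
Proof.
move=> decT g h; rewrite (apolarE z0).
under eq_bigr => f _ do rewrite decT mulr_sumr.
rewrite exchange_big /=; apply: eq_bigr => i _.
rewrite /mu_factor (mulr_sumr _ _ _ (c i)) mulr_suml; apply: eq_bigr => f _.
rewrite (@wedge_eq_pred F n L _ (predU (fun j => (o <= j) && (j < o + e))
                                       (fun j => o + e <= j)))%N; last first.
  move=> j /=; case: (leqP (o + e) j) => oej; rewrite ?orbT ?orbF ?andbT //.
  exact: leq_trans (leq_addr _ _) oej.
rewrite wedge_split; last by move=> j /andP [_]; rewrite -ltnNge.
rewrite (wedge_local _ _ (f1 := pullback z0 L o (join z0 f h))
                      (f2 := pullback z0 L o (join z0 f default_skew))); last first.
  by move=> b; apply: pullback_join_mu.
rewrite /skew_factor (wedge_local _ _ (f1 := pullback z0 L o (join z0 f h))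
                                    (f2 := pullback z0 L o (join z0 default_mu h))).
  by rewrite !mulrA (mulrC (g f)).
by move=> b; apply: pullback_join_skew.
Qed.

(* Hence the catalecticant of a tensor with m summands factors through F^m. *)
Lemma cat_rank_le (T : tensor F n (box lam)) o m (c : 'I_m -> F) vs :
  decomposition z0 L T o c vs -> (cat_rank mu T <= m)%N.
Proof.
move=> decT; rewrite /cat_rank.
pose U : 'M[F^o]_(#|{ffun box mu -> 'I_n}|, m) :=
  \matrix_(i, k) (c k * mu_factor o (vs k) (young (delta F (enum_val i)))).
pose W : 'M[F^o]_(m, #|{ffun skewbox lam mu -> 'I_n}|) :=
  \matrix_(k, j) skew_factor o (vs k) (enum_val j).
have -> : \matrix_(i, j) apolar T (young (delta F (enum_val i))) (enum_val j) = U *m W.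
  apply/matrixP => i j; rewrite !mxE (apolar_decomp decT).
  by apply: eq_bigr => k _; rewrite !mxE.
exact: leq_trans (mxrankM_maxl _ _) (rank_leq_col _).
Qed.

End Contraction.

Section Peeling.
Variables (F : fieldType) (n : nat) (z0 : 'I_n) (L lam mu rest : seq nat).
Hypothesis lam_split : lam = mu ++ rest.

Lemma mu_take : mu = take (size mu) lam.
Proof. by rewrite lam_split take_size_cat. Qed.

Lemma suffix_box (p : nat * nat) : (size mu <= p.1)%N ->
  (p \in shape_boxes lam) = ((p.1 - size mu, p.2)%N \in shape_boxes rest).
Proof.
case: p => j r /= muj; rewrite !mem_shape /= lam_split size_cat nth_cat.
have -> : (j < size mu)%N = false by rewrite ltnNge muj.
by rewrite -{1}(subnKC muj) ltn_add2l.
Qed.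

Lemma skew_col_ge (b : skewbox lam mu) : (size mu <= colno b)%N.
Proof.
have := valP b; rewrite mem_skew => /andP [Pl]; apply: contraNT; rewrite -ltnNge.
exact: (prefix_box mu_take Pl).
Qed.

Definition skew_of_rest (f : {ffun box rest -> 'I_n}) : {ffun skewbox lam mu -> 'I_n} :=
  [ffun b => read_at z0 f (colno b - size mu, rowno b)%N].

Lemma reindexE (s : tensor F n (skewbox lam mu)) (f : {ffun box rest -> 'I_n}) :
  Defs.reindex rest (size mu) s f = s (skew_of_rest f).
Proof.
rewrite ffunE (big_pred1 (skew_of_rest f)) // => h.
apply/idP/eqP => [/forallP match_h|->].
  apply/ffunP => b; rewrite ffunE /read_at.
  have muB := skew_col_ge b.
  have /andP [Pl _] : (ssval b \in shape_boxes lam) && (ssval b \notin shape_boxes mu).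
    by rewrite -mem_skew (valP b).
  case: insubP => [b' _ Eb'|]; last by rewrite -(suffix_box muB) Pl.
  have /forallP /(_ b') /implyP match_b := match_h b; apply/eqP/match_b.
  by rewrite Eb' /= subnK // !eqxx.
apply/forallP => b; apply/forallP => b'; apply/implyP => /andP [/eqP E1 /eqP E2].
rewrite ffunE /read_at E1 E2 addnK -surjective_pairing.
case: insubP => [b'' _ E|]; last by rewrite (valP b').
by have -> : b'' = b' by apply: val_inj.
Qed.

Lemma pullback_skew_of_rest o (g : {ffun box mu -> 'I_n}) (f : {ffun box rest -> 'I_n})
    (b : box L) : (o + size mu <= colno b)%N ->
  pullback z0 L o (join z0 g (skew_of_rest f)) b = pullback z0 L (o + size mu) f b.
Proof.
move=> omub; rewrite !ffunE /read_at.
have mub : (size mu <= colno b - o)%N.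
  by rewrite leq_subRL ?(leq_trans (leq_addr _ _) omub).
case: insubP => [c Pc Ec|nl].
  have muc : (size mu <= colno c)%N by rewrite Ec.
  rewrite ffunE; case: insubP => [c' |_].
    by rewrite (negbTE (prefix_notin mu_take muc)).
  case: insubP => [c'' _ Ec''|]; first by rewrite ffunE /read_at Ec'' Ec /= subnDA.
  by rewrite mem_skew (valP c) (prefix_notin mu_take muc).
case: insubP => [c Pr _|//]; move: nl.
by rewrite (suffix_box (p := (colno b - o, rowno b)%N) mub) /= -subnDA Pr.
Qed.

Lemma decomposition_peel (T : tensor F n (box lam)) o m (c : 'I_m -> F) vs :
  decomposition z0 L T o c vs -> forall g : tensor F n (box mu),
  decomposition z0 L (Defs.reindex rest (size mu) (apolar T g)) (o + size mu)
    (fun i => c i * mu_factor z0 L lam (size mu) o (vs i) g) vs.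
Proof.
move=> decT g f; rewrite reindexE (apolar_decomp mu_take decT).
apply: eq_bigr => i _; congr (_ * _); apply: wedge_local => b.
exact: pullback_skew_of_rest.
Qed.

End Peeling.

(* Each step of the Catalecticant Procedure either bounds a catalecticant rank
   by the number of summands (cat_rank_le) or passes to a tensor with as many
   summands (decomposition_peel); so its output is at most that number. *)
Lemma catproc_le (F : fieldType) (n : nat) (z0 : 'I_n) (L : seq nat)
    (bl : seq (nat * nat)) (T : tensor F n (box (cols_of bl))) (r : nat) :
  CatProc T r -> T != 0 ->
  forall o m (c : 'I_m -> F) vs, decomposition z0 L T o c vs -> (r <= m)%N.
Proof.
elim: bl T r => [|[k d] rest IH] T r /=.
  move=> -> T0 o [|m] c vs decT //; case/negP: T0; apply/eqP/ffunP => f.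
  by rewrite decT big_ord0 ffunE.
case=> [[_ ->]|[_ [t' [[t'0 [g [_ t'E]] _] Ct']]]] T0 o m c vs decT.
  have half_le : (uphalf d <= d)%N by rewrite leq_uphalf_double -addnn leq_addr.
  have half_prefix : nseq (uphalf d) k = take (uphalf d) (cols_of ((k, d) :: rest)).
    by rewrite /cols_of /= takel_cat ?size_nseq // take_nseq.
  exact: (cat_rank_le half_prefix decT).
subst t'; pose c' i := c i * mu_factor z0 L (cols_of ((k, d) :: rest)) d o (vs i) g.
apply: (IH _ _ Ct' t'0 (o + d)%N m c' vs).
have := decomposition_peel (lam := cols_of ((k, d) :: rest)) (rest := cols_of rest)
  (mu := nseq d k) erefl decT g.
by rewrite size_nseq.
Qed.

Theorem corollary5p5 (F : closedFieldType) (HF : [pchar F] =i pred0) (n : nat)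
    (bl : seq (nat * nat))
    (Hdec : sorted (fun p q : nat * nat => (q.1 < p.1)%N) bl)
    (Hpos : all (fun p : nat * nat => (0 < p.1)%N && (0 < p.2)%N) bl)
    (Hlen : (head 0%N (cols_of bl) < n)%N)
    (t : tensor F n (box (cols_of bl))) (Ht : inSchur t) (Ht0 : t != 0)
    (r : nat) (Hr : CatProc t r) :
  forall (m : nat) (v : 'I_m -> nat -> 'rV[F]_n),
    (forall i, lin_indep_data (cols_of bl) (v i)) ->
    t = \sum_(i < m) rank_one_elt (cols_of bl) (v i) ->
    (r <= m)%N.
Proof.
move=> m v _ t_sum; subst t.
(* n > 0, so index functions have a default value *)
have z0 : 'I_n := Ordinal (leq_ltn_trans (leq0n _) Hlen).
apply: (@catproc_le F n z0 (cols_of bl) bl _ r Hr Ht0 0 m (fun _ => 1) v).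
exact: rank_one_decomposition.
Qed.
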